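(* Let \[ \begin{array}{ccc} A & \overset{\alpha}{\to} & B\\ {\scriptstyle\beta}\downarrow & & \downarrow{\scriptstyle\gamma}\\ C & \underset{\delta}{\to} & D\end{array} \] be a pullback diagram in $\underline{\mathcal{H}}$. Suppose there exist $X\in\mathscr{C}^-$, $x_B\in\mathscr{C}(X,B)$ and $x_C\in\mathscr{C}(X,C)$ such that (i) $\gamma\circ\underline{x}_B=\delta\circ\underline{x}_C$ in $\underline{\mathscr{C}}$, and (ii) there is a distinguished triangle $X\overset{x_B}{\to}B\to U\to X[1]$ with $U\in\mathcal{U}$. Then $\alpha$ is an epimorphism in $\underline{\mathcal{H}}$.
   Context: $\mathscr{C}$ is a triangulated category with shift $[1]$; subcategories are full, additive, closed under isomorphisms and direct summands. $\mathrm{Ext}^1(X,Y)=\mathscr{C}(X,Y[1])$. $\mathcal{M}\ast\mathcal{N}$ is the full subcategory of objects $C$ admitting a distinguished triangle $M\to C\to N\to M[1]$ with $M\in\mathcal{M}$, $N\in\mathcal{N}$. A cotorsion pair $(\mathcal{U},\mathcal{V})$: $\mathrm{Ext}^1(\mathcal{U},\mathcal{V})=0$ and $\mathscr{C}=\mathcal{U}\ast\mathcal{V}[1]$. Fix a twin cotorsion pair, i.e. cotorsion pairs $(\mathcal{S},\mathcal{T}),(\mathcal{U},\mathcal{V})$ with $\mathrm{Ext}^1(\mathcal{S},\mathcal{V})=0$. Put $\mathcal{W}=\mathcal{T}\cap\mathcal{U}$, $\mathscr{C}^-=\mathcal{S}[-1]\ast\mathcal{W}$, $\mathscr{C}^+=\mathcal{W}\ast\mathcal{V}[1]$,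 $\mathcal{H}=\mathscr{C}^+\cap\mathscr{C}^-$. $\underline{\mathscr{C}}$, $\underline{\mathcal{H}}$ are the ideal quotients of $\mathscr{C}$, $\mathcal{H}$ by morphisms factoring through objects of $\mathcal{W}$ ($\underline{\mathcal{H}}$ is a full subcategory of $\underline{\mathscr{C}}$), and $\underline{f}$ is the image of $f$. *)

From HB Require Import structures.
From mathcomp Require Import all_boot all_order all_algebra.
Set Implicit Arguments. Unset Strict Implicit. Unset Printing Implicit Defensive.
Import GRing.Theory.
Local Open Scope ring_scope.

Record CatData := {
  Obj :> Type;
  Mor : Obj -> Obj -> zmodType;
  compm : forall X Y Z : Obj, Mor Y Z -> Mor X Y -> Mor X Z;
  idm : forall X : Obj, Mor X X
}.
Arguments Mor {c}.
Arguments compm {c X Y Z}.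
Arguments idm {c}.

Section CatDefs.
Variable C : CatData.

Definition cat_axioms : Prop :=
  (forall (X Y Z W : C) (h : Mor Z W) (g : Mor Y Z) (f : Mor X Y),
      compm h (compm g f) = compm (compm h g) f) /\
  (forall (X Y : C) (f : Mor X Y), compm (idm Y) f = f) /\
  (forall (X Y : C) (f : Mor X Y), compm f (idm X) = f) /\
  (forall (X Y Z : C) (g1 g2 : Mor Y Z) (f : Mor X Y),
      compm (g1 + g2) f = compm g1 f + compm g2 f) /\
  (forall (X Y Z : C) (g : Mor Y Z) (f1 f2 : Mor X Y),
      compm g (f1 + f2) = compm g f1 + compm g f2).

Definition is_iso (X Y : C) (f : Mor X Y) : Prop :=
  exists g : Mor Y X, compm g f = idm X /\ compm f g = idm Y.

Definition isomorphic (X Y : C) : Prop := exists f : Mor X Y, is_iso f.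

Definition is_zero_obj (Z : C) : Prop :=
  (forall (Y : C) (f g : Mor Z Y), f = g) /\ (forall (Y : C) (f g : Mor Y Z), f = g).

Definition is_biprod (X Y Z : C) (i1 : Mor X Z) (i2 : Mor Y Z)
    (p1 : Mor Z X) (p2 : Mor Z Y) : Prop :=
  [/\ compm p1 i1 = idm X, compm p2 i2 = idm Y, compm p1 i2 = 0, compm p2 i1 = 0
    & compm i1 p1 + compm i2 p2 = idm Z].

Definition additive_cat : Prop :=
  cat_axioms /\ (exists Z : C, is_zero_obj Z) /\
  (forall X Y : C, exists (Z : C) (i1 : Mor X Z) (i2 : Mor Y Z) (p1 : Mor Z X) (p2 : Mor Z Y),
      is_biprod i1 i2 p1 p2).

Definition direct_summand (X Y : C) : Prop :=
  exists (i : Mor X Y) (p : Mor Y X), compm p i = idm X.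

Definition subcat (P : C -> Prop) : Prop :=
  [/\ (forall X Y : C, isomorphic X Y -> P X -> P Y),
      (forall X Y : C, direct_summand X Y -> P Y -> P X),
      (forall Z : C, is_zero_obj Z -> P Z)
    & (forall (X Y Z : C) (i1 : Mor X Z) (i2 : Mor Y Z) (p1 : Mor Z X) (p2 : Mor Z Y),
         is_biprod i1 i2 p1 p2 -> P X -> P Y -> P Z)].

End CatDefs.

Section TriDefs.
Variable C : CatData.
Variable sh : C -> C.
Variable shm : forall X Y : C, Mor X Y -> Mor (sh X) (sh Y).
Variable dist : forall X Y Z : C, Mor X Y -> Mor Y Z -> Mor Z (sh X) -> Prop.
Arguments shm {X Y}.
Arguments dist {X Y Z}.

Definition shift_autoequiv : Prop :=
  [/\ (forall X : C, shm (idm X) = idm (sh X)),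
      (forall (X Y Z : C) (g : Mor Y Z) (f : Mor X Y), shm (compm g f) = compm (shm g) (shm f)),
      (forall (X Y : C) (f g : Mor X Y), shm (f + g) = shm f + shm g),
      (forall X Y : C, bijective (@shm X Y))
    & (forall Y : C, exists X : C, isomorphic (sh X) Y)].

Definition TR1 : Prop :=
  [/\ (forall (X Y Z X' Y' Z' : C) (f : Mor X Y) (g : Mor Y Z) (h : Mor Z (sh X))
         (f' : Mor X' Y') (g' : Mor Y' Z') (h' : Mor Z' (sh X'))
         (a : Mor X X') (b : Mor Y Y') (c : Mor Z Z'),
         is_iso a -> is_iso b -> is_iso c ->
         compm b f = compm f' a -> compm c g = compm g' b -> compm (shm a) h = compm h' c ->
         dist f g h -> dist f' g' h'),
      (forall X Z0 : C, is_zero_obj Z0 -> dist (idm X) (0 : Mor X Z0) (0 : Mor Z0 (sh X)))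
    & (forall (X Y : C) (f : Mor X Y), exists (Z : C) (g : Mor Y Z) (h : Mor Z (sh X)), dist f g h)].

Definition TR2 : Prop :=
  forall (X Y Z : C) (f : Mor X Y) (g : Mor Y Z) (h : Mor Z (sh X)),
    dist f g h <-> dist g h (- shm f).

Definition TR3 : Prop :=
  forall (X Y Z X' Y' Z' : C) (f : Mor X Y) (g : Mor Y Z) (h : Mor Z (sh X))
         (f' : Mor X' Y') (g' : Mor Y' Z') (h' : Mor Z' (sh X'))
         (a : Mor X X') (b : Mor Y Y'),
    dist f g h -> dist f' g' h' -> compm b f = compm f' a ->
    exists c : Mor Z Z', compm c g = compm g' b /\ compm (shm a) h = compm h' c.

Definition TR4 : Prop :=
  forall (X Y Z Z' X' Y' : C) (f : Mor X Y) (g : Mor Y Z)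
         (j : Mor Y Z') (k : Mor Z' (sh X))
         (l : Mor Z X') (i : Mor X' (sh Y))
         (m : Mor Z Y') (n : Mor Y' (sh X)),
    dist f j k -> dist g l i -> dist (compm g f) m n ->
    exists (p : Mor Z' Y') (q : Mor Y' X'),
      [/\ dist p q (compm (shm j) i),
          compm p j = compm m g, compm n p = k, compm q m = l
        & compm i q = compm (shm f) n].

Definition triangulated : Prop :=
  [/\ additive_cat C, shift_autoequiv, TR1, TR2 & TR3 /\ TR4].

End TriDefs.

Record TriCat := {
  tcat :> CatData;
  sh : tcat -> tcat;
  shm : forall X Y : tcat, Mor X Y -> Mor (sh X) (sh Y);
  dist : forall X Y Z : tcat, Mor X Y -> Mor Y Z -> Mor Z (sh X) -> Prop;
  tri_ax : triangulated shm dist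
}.
Arguments sh {t}.
Arguments shm {t X Y}.
Arguments dist {t X Y Z}.

Section Cotorsion.
Variable T : TriCat.

Definition Ext1_zero (M N : T -> Prop) : Prop :=
  forall X Y : T, M X -> N Y -> forall f : Mor X (sh Y), f = 0.

Definition ext_star (M N : T -> Prop) : T -> Prop :=
  fun Cc => exists (X Y : T) (f : Mor X Cc) (g : Mor Cc Y) (h : Mor Y (sh X)),
    [/\ M X, N Y & dist f g h].

Definition shift1 (N : T -> Prop) : T -> Prop :=
  fun Y => exists X : T, N X /\ isomorphic Y (sh X).
Definition shiftm1 (N : T -> Prop) : T -> Prop :=
  fun Y => exists X : T, N X /\ isomorphic (sh Y) X.

Definition cotorsion_pair (M N : T -> Prop) : Prop :=
  Ext1_zero M N /\ (forall Cc : T, ext_star M (shift1 N) Cc).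

Definition twin_cotorsion (S T' U V : T -> Prop) : Prop :=
  [/\ subcat S, subcat T', subcat U & subcat V] /\
  [/\ cotorsion_pair S T', cotorsion_pair U V & Ext1_zero S V].

Definition Wc (T' U : T -> Prop) : T -> Prop := fun X => T' X /\ U X.
Definition Cminus (S T' U : T -> Prop) : T -> Prop := ext_star (shiftm1 S) (Wc T' U).
Definition Cplus (T' U V : T -> Prop) : T -> Prop := ext_star (Wc T' U) (shift1 V).
Definition Hc (S T' U V : T -> Prop) : T -> Prop :=
  fun X => Cplus T' U V X /\ Cminus S T' U X.

(* equality in the ideal quotient by morphisms factoring through W *)
Definition eqW (W : T -> Prop) (X Y : T) (f g : Mor X Y) : Prop :=
  exists (W0 : T) (u : Mor X W0) (v : Mor W0 Y), W W0 /\ f - g = compm v u.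

(* pullback square in the full subcategory H/W of C/W *)
Definition pullback_in (H W : T -> Prop) (A B Cc D : T)
    (alpha : Mor A B) (beta : Mor A Cc) (gamma : Mor B D) (delta : Mor Cc D) : Prop :=
  [/\ H A, H B, H Cc & H D] /\
  eqW W (compm gamma alpha) (compm delta beta) /\
  (forall (E : T) (b : Mor E B) (c : Mor E Cc), H E ->
        eqW W (compm gamma b) (compm delta c) ->
        (exists e : Mor E A, eqW W (compm alpha e) b /\ eqW W (compm beta e) c) /\
        (forall e e' : Mor E A,
            eqW W (compm alpha e) b -> eqW W (compm beta e) c ->
            eqW W (compm alpha e') b -> eqW W (compm beta e') c -> eqW W e e')).

Definition epi_in (H W : T -> Prop) (A B : T) (alpha : Mor A B) : Prop :=
  forall (E : T) (f g : Mor B E), H E ->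
    eqW W (compm f alpha) (compm g alpha) -> eqW W f g.

End Cotorsion.

(** Let f, g : B -> E in H agree on alpha modulo W. Write E as an extension
    W2 -> E -> Y2 with Y2 in V[1]; it suffices that psi = q2 (f - g) : B -> Y2
    vanishes, for then f - g factors through W2. As Hom(U, V[1]) = 0, psi kills
    every morphism factoring through W; in particular psi alpha = 0.
    The object X of C^- has a reflection eta : X -> Z into H: morphisms from X
    to C^+ factor through eta, and eta reflects factorisation through W.
    Writing x_B = b eta and x_C = c eta, condition (i) gives gamma b = delta c
    modulo W, so the pullback yields e with alpha e = b modulo W. Hence
    psi b = 0, so psi x_B = 0, and psi factors through the cone U0 in U of x_B,
    which forces psi = 0. *)
From mathcomp Require Import all_boot all_order all_algebra.
Set Implicit Arguments. Unset Strict Implicit. Unset Printing Implicit Defensive.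
Import GRing.Theory.
Local Open Scope ring_scope.

Local Notation "g ∘ f" := (compm g f) (at level 40, left associativity).

(* Declaring the axioms a class lets the preadditive lemmas below find them for
   any triangulated category by instance resolution. *)
Existing Class cat_axioms.

Section Preadditive.
Context {C : CatData} {hC : cat_axioms C}.

Lemma compmA (X Y Z W : C) (h : Mor Z W) (g : Mor Y Z) (f : Mor X Y) :
  h ∘ (g ∘ f) = (h ∘ g) ∘ f.
Proof. by case: hC => H _; apply: H. Qed.

Lemma comp1m (X Y : C) (f : Mor X Y) : idm Y ∘ f = f.
Proof. by case: hC => _ [H _]; apply: H. Qed.

Lemma compm1 (X Y : C) (f : Mor X Y) : f ∘ idm X = f.
Proof. by case: hC => _ [_ [H _]]; apply: H. Qed.

Lemma compmDl (X Y Z : C) (g1 g2 : Mor Y Z) (f : Mor X Y) :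
  (g1 + g2) ∘ f = g1 ∘ f + g2 ∘ f.
Proof. by case: hC => _ [_ [_ [H _]]]; apply: H. Qed.

Lemma compmDr (X Y Z : C) (g : Mor Y Z) (f1 f2 : Mor X Y) :
  g ∘ (f1 + f2) = g ∘ f1 + g ∘ f2.
Proof. by case: hC => _ [_ [_ [_ H]]]; apply: H. Qed.

Lemma comp0m (X Y Z : C) (f : Mor X Y) : (0 : Mor Y Z) ∘ f = 0.
Proof. by apply: (@addrI _ (0 ∘ f)); rewrite -compmDl !addr0. Qed.

Lemma compm0 (X Y Z : C) (g : Mor Y Z) : g ∘ (0 : Mor X Y) = 0.
Proof. by apply: (@addrI _ (g ∘ 0)); rewrite -compmDr !addr0. Qed.

Lemma compmNl (X Y Z : C) (g : Mor Y Z) (f : Mor X Y) : (- g) ∘ f = - (g ∘ f).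
Proof. by apply/eqP; rewrite -addr_eq0 -compmDl addNr comp0m. Qed.

Lemma compmNr (X Y Z : C) (g : Mor Y Z) (f : Mor X Y) : g ∘ (- f) = - (g ∘ f).
Proof. by apply/eqP; rewrite -addr_eq0 -compmDr addNr compm0. Qed.

Lemma compmBl (X Y Z : C) (g1 g2 : Mor Y Z) (f : Mor X Y) :
  (g1 - g2) ∘ f = g1 ∘ f - g2 ∘ f.
Proof. by rewrite compmDl compmNl. Qed.

Lemma compmBr (X Y Z : C) (g : Mor Y Z) (f1 f2 : Mor X Y) :
  g ∘ (f1 - f2) = g ∘ f1 - g ∘ f2.
Proof. by rewrite compmDr compmNr. Qed.

Lemma is_iso_id (X : C) : is_iso (idm X).
Proof. by exists (idm X); rewrite comp1m. Qed.

Lemma is_iso_compm_eq0 (X Y Y' : C) (m : Mor X Y) (r : Mor Y Y') :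
  is_iso r -> r ∘ m = 0 -> m = 0.
Proof. by move=> [r' [r'r _]] rm0; rewrite -(comp1m m) -r'r -compmA rm0 compm0. Qed.

Definition factors_through (W : C -> Prop) (X Y : C) (t : Mor X Y) : Prop :=
  exists (W0 : C) (u : Mor X W0) (v : Mor W0 Y), W W0 /\ t = v ∘ u.

Lemma factors_throughD (W : C -> Prop) (X Y : C) (t1 t2 : Mor X Y) :
  (forall (W1 W2 Z : C) (i1 : Mor W1 Z) (i2 : Mor W2 Z) (p1 : Mor Z W1) (p2 : Mor Z W2),
     is_biprod i1 i2 p1 p2 -> W W1 -> W W2 -> W Z) ->
  (forall W1 W2 : C, exists (Z : C) (i1 : Mor W1 Z) (i2 : Mor W2 Z)
                            (p1 : Mor Z W1) (p2 : Mor Z W2), is_biprod i1 i2 p1 p2) ->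
  factors_through W t1 -> factors_through W t2 -> factors_through W (t1 + t2).
Proof.
move=> Wbiprod biprod [W1 [u1 [v1 [wW1 ->]]]] [W2 [u2 [v2 [wW2 ->]]]].
have [Z [i1 [i2 [p1 [p2 bp]]]]] := biprod W1 W2.
have [e11 e22 e12 e21 _] := bp.
exists Z, (i1 ∘ u1 + i2 ∘ u2), (v1 ∘ p1 + v2 ∘ p2); split; first exact: Wbiprod bp wW1 wW2.
rewrite compmDr !compmDl !compmA -!(compmA v1) -!(compmA v2) e11 e22 e12 e21.
by rewrite !comp0m !compm0 !comp1m addr0 add0r.
Qed.

End Preadditive.

#[local] Instance tricat_axioms (T : TriCat) : cat_axioms T.
Proof. by case: (tri_ax T) => [[]]. Qed.

Section Triangulated.
Variable T : TriCat.

Lemma tricat_additive : additive_cat T.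
Proof. by case: (tri_ax T). Qed.

Lemma tricat_shift : shift_autoequiv (@shm T).
Proof. by case: (tri_ax T). Qed.

Lemma tricat_TR1 : TR1 (@shm T) (@dist T). Proof. by case: (tri_ax T). Qed.
Lemma tricat_TR2 : TR2 (@shm T) (@dist T). Proof. by case: (tri_ax T). Qed.
Lemma tricat_TR3 : TR3 (@shm T) (@dist T). Proof. by case: (tri_ax T) => _ _ _ _ []. Qed.
Lemma tricat_TR4 : TR4 (@shm T) (@dist T). Proof. by case: (tri_ax T) => _ _ _ _ []. Qed.

Lemma shm1 (X : T) : shm (idm X) = idm (sh X).
Proof. by case: tricat_shift => H _ _ _ _; apply: H. Qed.

Lemma shmM (X Y Z : T) (g : Mor Y Z) (f : Mor X Y) : shm (g ∘ f) = shm g ∘ shm f.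
Proof. by case: tricat_shift => _ H _ _ _; apply: H. Qed.

Lemma shmD (X Y : T) (f g : Mor X Y) : shm (f + g) = shm f + shm g.
Proof. by case: tricat_shift => _ _ H _ _; apply: H. Qed.

Lemma shm_bij (X Y : T) : bijective (@shm T X Y).
Proof. by case: tricat_shift => _ _ _ H _; apply: H. Qed.

Lemma shm0 (X Y : T) : shm (0 : Mor X Y) = 0.
Proof. by apply: (@addrI _ (shm 0)); rewrite -shmD !addr0. Qed.

Lemma shm_inj (X Y : T) : injective (@shm T X Y).
Proof. exact: bij_inj (shm_bij X Y). Qed.

Lemma shm_surj (X Y : T) (c : Mor (sh X) (sh Y)) : exists f, shm f = c.
Proof. by case: (shm_bij X Y) => g _ gK; exists (g c); rewrite gK. Qed.

Lemma sh_essentially_surjective (Y : T) : exists X : T, isomorphic (sh X) Y.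
Proof. by case: tricat_shift => _ _ _ _ H; apply: H. Qed.

Lemma zero_obj_exists : exists Z : T, is_zero_obj Z.
Proof. by case: tricat_additive => _ []. Qed.

Lemma is_zero_obj_sh (Z : T) : is_zero_obj Z -> is_zero_obj (sh Z).
Proof.
move=> [Zinit _].
have id0 : idm (sh Z) = 0 by rewrite -shm1 (Zinit Z (idm Z) 0) shm0.
split=> Y f g; first by rewrite -(compm1 f) -(compm1 g) id0 !compm0.
by rewrite -(comp1m f) -(comp1m g) id0 !comp0m.
Qed.

Lemma dist_shift (X Y Z : T) (f : Mor X Y) (g : Mor Y Z) (h : Mor Z (sh X)) :
  dist (- shm f) (- shm g) (- shm h) -> dist f g h.
Proof. by move=> D; apply/tricat_TR2/tricat_TR2/tricat_TR2. Qed.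

Lemma dist_weak_cokernel (X Y Z Y' : T) (f : Mor X Y) (g : Mor Y Z) (h : Mor Z (sh X))
    (t : Mor Y Y') :
  dist f g h -> t ∘ f = 0 -> exists k : Mor Z Y', t = k ∘ g.
Proof.
move=> D tf0; have [Z0 Z0zero] := zero_obj_exists.
have D0 : dist (0 : Mor Z0 Y') (idm Y') (0 : Mor Y' (sh Z0)).
  apply/tricat_TR2; rewrite shm0 oppr0.
  by case: tricat_TR1 => _ H _; apply/H/is_zero_obj_sh.
have tf : t ∘ f = 0 ∘ (0 : Mor X Z0) by rewrite tf0 comp0m.
have [k [kg _]] := tricat_TR3 D D0 tf.
by exists k; rewrite kg comp1m.
Qed.

Lemma dist_weak_kernel (X Y Z W : T) (f : Mor X Y) (g : Mor Y Z) (h : Mor Z (sh X))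
    (t : Mor W Y) :
  dist f g h -> g ∘ t = 0 -> exists s : Mor W X, t = f ∘ s.
Proof.
move=> D gt0; have [Z0 Z0zero] := zero_obj_exists.
have D0 : dist (0 : Mor W Z0) (0 : Mor Z0 (sh W)) (- shm (idm W)).
  by apply: (tricat_TR2 _ _ _).1; case: tricat_TR1 => _ H _; apply: H.
have t0 : (0 : Mor Z0 Z) ∘ (0 : Mor W Z0) = g ∘ t by rewrite gt0 comp0m.
have [c [_ ch]] := tricat_TR3 D0 ((tricat_TR2 _ _ _).1 D) t0.
move: ch; rewrite shm1 compmNr compm1 compmNl => /oppr_inj ch.
have [s sc] := shm_surj c.
by exists s; apply: shm_inj; rewrite shmM sc.
Qed.

Lemma dist_desuspend (A Y Cc Q T1 : T) (F : Mor A (sh Y)) (G : Mor (sh Y) Cc)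
    (H : Mor Cc (sh A)) (th : Mor (sh Q) A) (rh : Mor Cc (sh T1)) :
  is_iso th -> is_iso rh -> dist F G H ->
  exists (a : Mor Q Y) (b : Mor Y T1) (c : Mor T1 (sh Q)), dist a b c.
Proof.
move=> [th' [th'th thth']] [rh' [rh'rh rhrh']] D.
have [a ea] := shm_surj (- (F ∘ th)).
have [b eb] := shm_surj (- (rh ∘ G)).
have [c ec] := shm_surj (- (shm th' ∘ H ∘ rh')).
exists a, b, c; apply: dist_shift; rewrite ea eb ec !opprK.
case: tricat_TR1 => iso_closed _ _.
apply: (iso_closed _ _ _ _ _ _ _ _ _ _ _ _ th' (idm _) rh _ _ _ _ _ _ D).
- by exists th.
- exact: is_iso_id.
- by exists rh'.
- by rewrite -compmA thth' compm1 comp1m.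
- by rewrite compm1.
- by rewrite -compmA rh'rh compm1.
Qed.

End Triangulated.

Section CotorsionPairs.
Variable T : TriCat.
Implicit Types M N : T -> Prop.

Lemma shift1_sh M (X : T) : M X -> shift1 M (sh X).
Proof. by move=> MX; exists X; split=> //; exists (idm _); apply: is_iso_id. Qed.

Lemma Ext1_zero_shift1 M N (X Y : T) (m : Mor X Y) :
  Ext1_zero M N -> M X -> shift1 N Y -> m = 0.
Proof. by move=> ext MX [N0 [NN0 [r r_iso]]]; apply: (is_iso_compm_eq0 r_iso); apply: ext. Qed.

Lemma Ext1_zero_shiftm1 M N (P Y : T) (m : Mor P Y) :
  Ext1_zero M N -> shiftm1 M P -> N Y -> m = 0.
Proof.
move=> ext [M0 [MM0 [th [th' [th'th _]]]]] NY; apply: shm_inj.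
by rewrite shm0 -(compm1 (shm m)) -th'th compmA (ext _ _ MM0 NY (shm m ∘ th')) comp0m.
Qed.

Lemma Ext1_zero_shiftm1_shift1 M N (P Y : T) (l : Mor (sh P) Y) :
  Ext1_zero M N -> shiftm1 M P -> shift1 N Y -> l = 0.
Proof.
move=> ext [M0 [MM0 [th [th' [th'th _]]]]] NY.
by rewrite -(compm1 l) -th'th compmA (Ext1_zero_shift1 (l ∘ th') ext MM0 NY) comp0m.
Qed.

Lemma cotorsion_pair_left M N (X : T) :
  cotorsion_pair M N -> subcat M ->
  (forall (N0 : T) (phi : Mor X (sh N0)), N N0 -> phi = 0) -> M X.
Proof.
move=> [_ decomp] [_ M_summand _ _] orth.
have [M0 [Y0 [f [g [h [MM0 [N0 [NN0 [r r_iso]]] D]]]]]] := decomp X.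
have g0 : g ∘ idm X = 0 by rewrite compm1; apply: (is_iso_compm_eq0 r_iso); apply: orth.
have [s fs] := dist_weak_kernel D g0.
by apply: (M_summand X M0) => //; exists s, f.
Qed.

Lemma cotorsion_pair_shiftm1 M N (Y : T) :
  cotorsion_pair M N -> ext_star (shiftm1 M) N Y.
Proof.
move=> [_ decomp].
have [M0 [Y0 [f [g [h [MM0 [N0 [NN0 [r r_iso]]] D]]]]]] := decomp (sh Y).
have [Q [th th_iso]] := sh_essentially_surjective M0.
have [a [b [c Dabc]]] := dist_desuspend th_iso r_iso D.
by exists Q, N0, a, b, c; split=> //; exists M0; split=> //; exists th.
Qed.

End CotorsionPairs.

Section TwinCotorsion.
Variables (T : TriCat) (S T' U V : T -> Prop).
Hypothesis twin : twin_cotorsion S T' U V.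
Local Notation W := (Wc T' U).

Lemma twin_subcat_U : subcat U. Proof. by case: twin => [[]]. Qed.
Lemma twin_cotorsion_ST : cotorsion_pair S T'. Proof. by case: twin => _ []. Qed.
Lemma twin_cotorsion_UV : cotorsion_pair U V. Proof. by case: twin => _ []. Qed.
Lemma twin_Ext1_SV : Ext1_zero S V. Proof. by case: twin => _ []. Qed.
Lemma twin_Ext1_ST : Ext1_zero S T'. Proof. by case: twin_cotorsion_ST. Qed.
Lemma twin_Ext1_UV : Ext1_zero U V. Proof. by case: twin_cotorsion_UV. Qed.

Lemma factors_through_WD (X Y : T) (t1 t2 : Mor X Y) :
  factors_through W t1 -> factors_through W t2 -> factors_through W (t1 + t2).
Proof.
apply: factors_throughD => [W1 W2 Z i1 i2 p1 p2 bp [TW1 UW1] [TW2 UW2]|].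
  case: twin => [[_ [_ _ _ T'biprod] [_ _ _ Ubiprod] _]] _.
  by split; [apply: (T'biprod _ _ _ _ _ _ _ bp) | apply: (Ubiprod _ _ _ _ _ _ _ bp)].
by case: (tricat_additive T) => _ [].
Qed.

Lemma comp_factors_through_W_eq0 (X Y Y2 : T) (t : Mor X Y) (m : Mor Y Y2) :
  factors_through W t -> shift1 V Y2 -> m ∘ t = 0.
Proof.
move=> [W0 [u [v [[_ UW0] ->]]]] VY2.
by rewrite compmA (Ext1_zero_shift1 (m ∘ v) twin_Ext1_UV UW0 VY2) comp0m.
Qed.

(* A map phi : Z -> V0[1] with phi b = 0 factors through c : Z -> Q[1], and
   Hom(S, V[1]) = 0. *)
Lemma cone_in_U (Q Y Z : T) (a : Mor Q Y) (b : Mor Y Z) (c : Mor Z (sh Q)) :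
  dist a b c -> shiftm1 S Q ->
  (forall (V0 : T) (phi : Mor Z (sh V0)), V V0 -> phi ∘ b = 0) -> U Z.
Proof.
move=> D SQ orth; apply: (cotorsion_pair_left twin_cotorsion_UV twin_subcat_U) => V0 phi VV0.
have [l ->] := dist_weak_cokernel ((tricat_TR2 _ _ _).1 D) (orth V0 phi VV0).
by rewrite (Ext1_zero_shiftm1_shift1 l twin_Ext1_SV SQ (shift1_sh VV0)) comp0m.
Qed.

Lemma Cplus_hom_U_eq0 (P U0 Y : T) (a : Mor P U0) (h : Mor U0 Y) :
  shiftm1 S P -> U U0 -> Cplus T' U V Y -> h ∘ a = 0.
Proof.
move=> SP UU0 [W2 [Y2 [p2 [q2 [r2 [[TW2 _] VY2 D2]]]]]].
have q2h : q2 ∘ h = 0 by apply: (Ext1_zero_shift1 _ twin_Ext1_UV UU0 VY2).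
have [m ->] := dist_weak_kernel D2 q2h.
by rewrite -compmA (Ext1_zero_shiftm1 (m ∘ a) twin_Ext1_ST SP TW2) compm0.
Qed.

Definition Cplus_reflection (X Z : T) (eta : Mor X Z) : Prop :=
  [/\ Hc S T' U V Z,
      forall (Y : T) (g : Mor X Y), Cplus T' U V Y -> exists g' : Mor Z Y, g = g' ∘ eta
    & forall (Y : T) (t : Mor Z Y), Cplus T' U V Y ->
        factors_through W (t ∘ eta) -> factors_through W t].

(* Z is the cone of P -> UX -> X, where UX -> X is the U-approximation of X and
   P -> UX the S[-1]-approximation of UX. *)
Section Reflection.
Variables (X UX YX P T2 Z : T).
Variables (uX : Mor UX X) (vX : Mor X YX) (wX : Mor YX (sh UX)).
Variables (a : Mor P UX) (b : Mor UX T2) (c : Mor T2 (sh P)).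
Variables (eta : Mor X Z) (zeta : Mor Z (sh P)).
Hypotheses (dX : dist uX vX wX) (UUX : U UX) (VYX : shift1 V YX).
Hypotheses (dP : dist a b c) (SP : shiftm1 S P) (TT2 : T' T2).
Hypothesis dZ : dist (uX ∘ a) eta zeta.

Lemma reflection_Cplus : Cplus T' U V Z.
Proof.
have UT2 : U T2.
  apply: (cone_in_U dP SP) => V0 phi VV0.
  exact: (Ext1_zero_shift1 _ twin_Ext1_UV UUX (shift1_sh VV0)).
have [p [q [Dpq _ _ _ _]]] := tricat_TR4 dP dX dZ.
by exists T2, YX, p, q, (shm b ∘ wX).
Qed.

Lemma reflection_Cminus : Cminus S T' U X -> Cminus S T' U Z.
Proof.
move=> [S' [W1 [s [w [r [SS' [_ UW1] Ds]]]]]].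
have [Q [Tm [a' [b' [c' [SQ TTm Dq]]]]]] := cotorsion_pair_shiftm1 Z twin_cotorsion_ST.
exists Q, Tm, a', b', c'; split=> //; split=> //.
apply: (cone_in_U Dq SQ) => V0 phi VV0.
have b'eta_s : (b' ∘ eta) ∘ s = 0 by apply: (Ext1_zero_shiftm1 _ twin_Ext1_ST).
have [k b'eta] := dist_weak_cokernel Ds b'eta_s.
have phib'eta : (phi ∘ b') ∘ eta = 0.
  by rewrite -compmA b'eta compmA (twin_Ext1_UV UW1 VV0 (phi ∘ k)) comp0m.
have [l ->] := dist_weak_cokernel ((tricat_TR2 _ _ _).1 dZ) phib'eta.
by rewrite (Ext1_zero_shiftm1_shift1 l twin_Ext1_SV SP (shift1_sh VV0)) comp0m.
Qed.

Lemma reflection_factor (Y : T) (g : Mor X Y) :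
  Cplus T' U V Y -> exists g' : Mor Z Y, g = g' ∘ eta.
Proof.
move=> CY; apply: (dist_weak_cokernel dZ).
by rewrite compmA (Cplus_hom_U_eq0 _ _ SP UUX CY).
Qed.

Lemma reflection_factors_through (Y : T) (t : Mor Z Y) :
  Cplus T' U V Y -> factors_through W (t ∘ eta) -> factors_through W t.
Proof.
move=> CY [W0 [u0 [v0 [[TW0 UW0] teta]]]].
have u0uXa : u0 ∘ (uX ∘ a) = 0.
  by rewrite compmA (Ext1_zero_shiftm1 (u0 ∘ uX ∘ a) twin_Ext1_ST SP TW0).
have [m0 u0E] := dist_weak_cokernel dZ u0uXa.
have t_eta : (t - v0 ∘ m0) ∘ eta = 0 by rewrite compmBl teta u0E -compmA subrr.
have [k tE] := dist_weak_cokernel ((tricat_TR2 _ _ _).1 dZ) t_eta.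
case: CY => [W2 [Y2 [p2 [q2 [r2 [W_W2 VY2 D2]]]]]].
have q2k : q2 ∘ k = 0 by apply: (Ext1_zero_shiftm1_shift1 _ twin_Ext1_SV SP VY2).
have [k' kE] := dist_weak_kernel D2 q2k.
have -> : t = v0 ∘ m0 + p2 ∘ (k' ∘ zeta) by rewrite compmA -kE -tE addrC subrK.
by apply: factors_through_WD; [exists W0, m0, v0 | exists W2, (k' ∘ zeta), p2].
Qed.

End Reflection.

Lemma Cminus_reflection (X : T) :
  Cminus S T' U X -> exists (Z : T) (eta : Mor X Z), Cplus_reflection eta.
Proof.
move=> CX.
have [UX [YX [uX [vX [wX [UUX VYX dX]]]]]] := (twin_cotorsion_UV).2 X.
have [P [T2 [a [b [c [SP TT2 dP]]]]]] := cotorsion_pair_shiftm1 UX twin_cotorsion_ST.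
have [_ _ cone] := tricat_TR1 T.
have [Z [eta [zeta dZ]]] := cone _ _ (uX ∘ a).
exists Z, eta; split.
- exact: (conj (reflection_Cplus dX UUX VYX dP SP TT2 dZ) (reflection_Cminus SP dZ CX)).
- exact: (reflection_factor UUX SP dZ).
- exact: (reflection_factors_through SP dZ).
Qed.

End TwinCotorsion.

Unset Implicit Arguments.

Theorem lemma5p3 (T : TriCat) (S T' U V : T -> Prop)
  (twin : twin_cotorsion S T' U V)
  (A B C D : T) (alpha : Mor A B) (beta : Mor A C) (gamma : Mor B D) (delta : Mor C D)
  (pb : pullback_in (Hc S T' U V) (Wc T' U) alpha beta gamma delta)
  (X : T) (hX : Cminus S T' U X) (xB : Mor X B) (xC : Mor X C)
  (h1 : eqW (Wc T' U) (compm gamma xB) (compm delta xC))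
  (h2 : exists (U0 : T) (g : Mor B U0) (h : Mor U0 (sh X)), U U0 /\ dist xB g h) :
  epi_in (Hc S T' U V) (Wc T' U) alpha.
Proof.
move=> E f g [[W2 [Y2 [p2 [q2 [r2 [WW2 VY2 D2]]]]]] _] fg_alpha.
case: pb => [[_ [CB _] [CC _] [CD _]] [_ pb_universal]].
suff psi0 : q2 ∘ (f - g) = 0.
  by have [s fgE] := dist_weak_kernel D2 psi0; exists W2, s, p2.
set psi := q2 ∘ (f - g).
have psi_alpha : psi ∘ alpha = 0.
  by rewrite -compmA compmBl (comp_factors_through_W_eq0 twin q2 fg_alpha VY2).
have [Z [eta [HZ factor reflect]]] := Cminus_reflection twin hX.
have [b xBE] := factor B xB CB.
have [c xCE] := factor C xC CC.
have gb_dc : factors_through (Wc T' U) (gamma ∘ b - delta ∘ c).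
  by apply: reflect => //; rewrite compmBl -!compmA -xBE -xCE.
have [[e [alpha_e _]] _] := pb_universal Z b c HZ gb_dc.
have psi_b : psi ∘ b = 0.
  rewrite -[b](subKr (alpha ∘ e)) compmBr compmA psi_alpha comp0m.
  by rewrite (comp_factors_through_W_eq0 twin psi alpha_e VY2) subr0.
have [U0 [gB [hB [UU0 DB]]]] := h2.
have psi_xB : psi ∘ xB = 0 by rewrite xBE compmA psi_b comp0m.
have [k ->] := dist_weak_cokernel DB psi_xB.
by rewrite (Ext1_zero_shift1 k (twin_Ext1_UV twin) UU0 VY2) comp0m.
Qed.
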